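(* Let $(X,d,A)$ be a metric pair and $p\in[1,\infty)$. If $(X,d)$ is complete, then $(\overline{D}_p(X,A),W_p)$ is complete.
   Context: A metric on $X$ is a map $d:X\times X\to[0,\infty]$ with $d(x,x)=0$, symmetry and the triangle inequality (infinite distances allowed, $d(x,y)=0$ need not imply $x=y$, so limits need not be unique); complete means every Cauchy sequence converges. A metric pair $(X,d,A)$ is such a space with a closed subset $A$. Write $d(x,A)=\inf_{a\in A}d(x,a)$, $A^\delta=\{x:d(x,A)<\delta\}$ for $\delta\in(0,\infty]$. $\overline{D}(X,A)$ is the set of countable formal sums $\hat\alpha=\sum_{i\in I}x_i$ of points of $X\setminus A$ (repetitions allowed); $0$ the empty sum. A matching of $\hat\alpha=\sum_{i\in I}x_i$, $\hat\beta=\sum_{j\in J}y_j$ is a formal sum $\sum_{k\in K}(x_k,y_{\varphi(k)})+\sum_{i\in I\setminus K}(x_i,z_i)+\sum_{j\in J\setminus\varphi(K)}(w_j,y_j)$ with $K\subset I$, $\varphi$ injective, $z_i,w_j\in A$; its $p$-cost is the $\ell^p$ norm of the distances of paired points; $W_p$ is the infimum of $p$-costs. $u_\delta(\alpha)$, $\ell_\delta(\alpha)$ are the restrictions of $\hat\alpha$ to $X\setminus A^\delta$ and to $A^\delta\setminus A$, and $\overline{D}_p(X,A)=\{\alpha: |u_\infty(\alpha)|<\infty,\ W_p(\ell_\infty(\alpha),0)<\infty\}$. *)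

From HB Require Import structures.
From mathcomp Require Import all_boot all_order all_algebra.
From mathcomp Require Import all_classical all_reals all_analysis.
Set Implicit Arguments. Unset Strict Implicit. Unset Printing Implicit Defensive.
Import Order.TTheory GRing.Theory Num.Theory.
Local Open Scope classical_set_scope.
Local Open Scope ereal_scope.

Section Defs.
Context {R : realType} {X : Type}.

(* An extended pseudometric d : X -> X -> [0, +oo] (d x y = 0 need not imply x = y). *)
Definition is_metric (d : X -> X -> \bar R) : Prop :=
  [/\ (forall x y, 0 <= d x y),
      (forall x, d x x = 0),
      (forall x y, d x y = d y x) &
      (forall x y z, d x z <= d x y + d y z)].

Definition cauchy_seq {T : Type} (D : T -> T -> \bar R) (u : nat -> T) : Prop :=
  forall eps : R, (0 < eps)%R ->
    exists N, forall m n, (N <= m)%N -> (N <= n)%N -> D (u m) (u n) < eps%:E.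

Definition converges_to {T : Type} (D : T -> T -> \bar R) (u : nat -> T) (l : T) : Prop :=
  forall eps : R, (0 < eps)%R ->
    exists N, forall n, (N <= n)%N -> D (u n) l < eps%:E.

Definition complete (d : X -> X -> \bar R) : Prop :=
  forall u : nat -> X, cauchy_seq d u -> exists l, converges_to d u l.

Definition dist_set (d : X -> X -> \bar R) (x : X) (A : set X) : \bar R :=
  ereal_inf [set d x a | a in A].

Definition closed_in (d : X -> X -> \bar R) (A : set X) : Prop :=
  forall x, (forall eps : R, (0 < eps)%R -> exists2 a, A a & d x a < eps%:E) -> A x.

(* A countable formal sum sum_{i in I} x_i, with I a subset of nat. *)
Record fsum := FSum { fidx : set nat ; fpt : nat -> X }.

Definition in_Dbar (A : set X) (a : fsum) : Prop :=
  forall i, fidx a i -> ~ A (fpt a i).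

(* The empty formal sum 0 (the point function is irrelevant; we reuse that of
   a given sum so as not to need X inhabited). *)
Definition fsum_zero (a : fsum) : fsum := FSum set0 (fpt a).

Definition restrict (a : fsum) (S : set X) : fsum :=
  FSum [set i | fidx a i /\ S (fpt a i)] (fpt a).

(* A matching between a = sum_{i in I} x_i and b = sum_{j in J} y_j:
   K subset of I, phi : K -> J injective, z_i in A for i in I \ K,
   w_j in A for j in J \ phi(K). *)
Record matching_data := MData {
  mK : set nat ; mphi : nat -> nat ; mz : nat -> X ; mw : nat -> X }.

Definition is_matching (A : set X) (a b : fsum) (m : matching_data) : Prop :=
  [/\ mK m `<=` fidx a,
      (forall k, mK m k -> fidx b (mphi m k)),
      {in mK m &, injective (mphi m)},
      (forall i, fidx a i -> ~ mK m i -> A (mz m i)) &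
      (forall j, fidx b j -> ~ (mphi m @` mK m) j -> A (mw m j))].

Definition pcost (d : X -> X -> \bar R) (p : R) (a b : fsum) (m : matching_data)
  : \bar R :=
  poweR
   ((esum (mK m) (fun k => poweR (d (fpt a k) (fpt b (mphi m k))) p))
    + (esum (fidx a `\` mK m) (fun i => poweR (d (fpt a i) (mz m i)) p))
    + (esum (fidx b `\` (mphi m @` mK m)) (fun j => poweR (d (mw m j) (fpt b j)) p)))
   (p^-1)%R.

Definition Wp (d : X -> X -> \bar R) (A : set X) (p : R) (a b : fsum) : \bar R :=
  ereal_inf [set pcost d p a b m | m in is_matching A a b].

Definition nbhd_set (d : X -> X -> \bar R) (A : set X) (delta : \bar R) : set X :=
  [set x | dist_set d x A < delta].

Definition u_part (d : X -> X -> \bar R) (A : set X) (delta : \bar R) (a : fsum) :=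
  restrict a (~` nbhd_set d A delta).
Definition l_part (d : X -> X -> \bar R) (A : set X) (delta : \bar R) (a : fsum) :=
  restrict a (nbhd_set d A delta `\` A).

Definition Dp (d : X -> X -> \bar R) (A : set X) (p : R) : set fsum :=
  [set a | in_Dbar A a
         /\ finite_set (fidx (u_part d A +oo a))
         /\ Wp d A p (l_part d A +oo a) (fsum_zero (l_part d A +oo a)) < +oo].

End Defs.

From HB Require Import structures.
From mathcomp Require Import all_boot all_order all_algebra.
From mathcomp Require Import all_classical all_reals all_analysis.
From mathcomp Require Import lra zify.
Import Order.TTheory GRing.Theory Num.Theory.
Local Open Scope classical_set_scope.
Local Open Scope ereal_scope.

(* Pass to a subsequence gam j = alpha (k j) whose consecutive terms are joined
   by matchings of p-th power cost below rho j ^ p, with rho j = 2^-(4j+4).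
   Following a point along these matchings, and onto the diagonal A once it is
   left unmatched, gives a chain whose j-th step is at most rho j; as X is
   complete, the chain converges.  The limit beta is the formal sum of the limits
   of the chains that never reach A and converge off A.  Since
   d(x_0, lim x)^p <= sum_j 2^((j+1)p) d(x_j, x_(j+1))^p, matching every point of
   alpha n with the limit of its chain costs at most the dyadically weighted sum
   of the costs of the matchings used, which is at most 2^-J once n >= k J.  The
   same matching, having finite cost, shows that beta lies in D_p(X, A). *)

(** * Sums and powers in the extended reals *)

Section ereal_sums.
Context {R : realType}.
Implicit Types T U : choiceType.

Lemma esum_ge_term {T} (I : set T) (a : T -> \bar R) i :
  (forall j, I j -> 0 <= a j) -> I i -> a i <= esum I a.
Proof.
move=> a0 Ii; apply: esum_ge; exists [set i]; last by rewrite fsbig_set1.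
by split; [exact: finite_set1 | move=> j ->].
Qed.

Arguments esum_ge_term {T I a i}.

Lemma esum_lty_term {T} (I : set T) (a : T -> \bar R) i :
  (forall j, I j -> 0 <= a j) -> I i -> esum I a < +oo -> a i < +oo.
Proof. by move=> a0 Ii; apply: le_lt_trans; exact: esum_ge_term. Qed.

Lemma subset_le_esum {T} (I J : set T) (a : T -> \bar R) :
  (forall j, J j -> 0 <= a j) -> I `<=` J -> esum I a <= esum J a.
Proof.
move=> a0 IJ; rewrite [leLHS]esum_mkcond [leRHS]esum_mkcond; apply: le_esum => i _.
case: ifPn => [/[!inE] /IJ Ji|_]; first by rewrite ifT ?inE.
by case: ifPn => // /[!inE] /a0.
Qed.

Lemma esum_setI_supp {T} (Q I : set T) (a : T -> \bar R) :
  (forall i, I i -> ~ Q i -> a i = 0) -> esum I a = esum (I `&` Q) a.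
Proof.
move=> a0; rewrite esum_mkcondr; apply: eq_esum => i Ii.
by case: ifPn => // /negP; rewrite inE => /(a0 i Ii).
Qed.

Lemma le_esum_inj {T U} (I : set T) (J : set U) (h : T -> U)
    (a : T -> \bar R) (b : U -> \bar R) :
  (forall j, J j -> 0 <= b j) -> set_inj I h ->
  (forall i, I i -> J (h i) /\ a i <= b (h i)) ->
  esum I a <= esum J b.
Proof.
move=> b0 hinj hJ; apply: (@le_trans _ _ (esum I (b \o h))).
  by apply: le_esum => i /hJ[].
rewrite -(esum_image _ _ b hinj); apply: subset_le_esum => // _ [i /hJ[Jh _] <-].
exact: Jh.
Qed.

Lemma esumZl_le {T} (I : set T) (a : T -> \bar R) (c : R) :
  (0 <= c)%R -> (forall i, 0 <= a i) ->
  esum I (fun i => c%:E * a i) <= c%:E * esum I a.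
Proof.
move=> c0 a0; apply: ge_ereal_sup => _ [F [finF FI] <-] /=.
rewrite -ge0_mule_fsumr //; apply: lee_wpmul2l; first by rewrite lee_fin.
by apply: ereal_sup_ubound; exists F.
Qed.

Lemma esum_interchange {T U} (I : set T) (J : set U) (a : T -> U -> \bar R) :
  (forall i j, 0 <= a i j) ->
  esum I (fun i => esum J (a i)) = esum J (fun j => esum I (fun i => a i j)).
Proof.
move=> a0; rewrite (esum_esum (J := fun=> J)) // (esum_esum (J := fun=> I)) //.
rewrite (reindex_esum (I `*`` fun=> J) _ (fun x => (x.2, x.1))) //; split => /=.
- by move=> [i j] [/=].
- by move=> [i1 i2] [j1 j2] /= _ _ [] -> ->.
- by move=> [i1 i2] [Pi1 Qi2] /=; exists (i2, i1).
Qed.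

End ereal_sums.

Section ereal_powers.
Context {R : realType}.
Implicit Types (r : R) (x y : \bar R).

Lemma ler_poweR r x y : (0 < r)%R -> 0 <= x -> 0 <= y ->
  (x `^ r <= y `^ r) = (x <= y).
Proof.
move=> r0 x0 y0; apply/idP/idP => [|xy]; last first.
  by apply: gt0_ler_poweR => //; rewrite ?(ltW r0) // in_itv /= ?x0 ?y0 leey.
move=> /(@gt0_ler_poweR _ r^-1); rewrite -!poweRrM mulfV ?gt_eqF // !poweRe1 //.
by apply; rewrite ?invr_ge0 ?(ltW r0) // in_itv /= poweR_ge0 leey.
Qed.

Lemma ltr_poweR r x y : (0 < r)%R -> 0 <= x -> 0 <= y ->
  (x `^ r < y `^ r) = (x < y).
Proof. by move=> r0 x0 y0; rewrite !ltNge ler_poweR. Qed.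

Lemma poweRKV r x : (0 < r)%R -> 0 <= x -> (x `^ r^-1) `^ r = x.
Proof. by move=> r0 x0; rewrite -poweRrM mulVf ?gt_eqF // poweRe1. Qed.

Lemma poweRD_le r x y : (0 < r)%R -> 0 <= x -> 0 <= y ->
  (x + y) `^ r <= ((2 : R) `^ r)%:E * (x `^ r + y `^ r).
Proof.
move=> r0; wlog xy : x y / x <= y.
  move=> W x0 y0; have [xy|/ltW yx] := leP x y; first exact: W.
  by rewrite addeC [_ `^ r + _]addeC; apply: W.
move=> x0 y0; have xNy : x != -oo by rewrite gt_eqF // (lt_le_trans _ x0) ?ltNyr.
case: y xy y0 => [t| |] // xt t0; last first.
  have pNy : x `^ r != -oo.
    by rewrite gt_eqF // (lt_le_trans _ (poweR_ge0 x r)) ?ltNyr.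
  by rewrite addey // poweRyr ?gt_eqF // addey // gt0_muley ?lte_fin ?powR_gt0.
case: x xt x0 {xNy} => [s st s0| |//]; last by rewrite leNgt ltey.
rewrite -EFinD !poweR_EFin -EFinD -EFinM lee_fin.
rewrite !lee_fin in st s0 t0.
apply: (@le_trans _ _ ((2 * t) `^ r)%R).
  by apply: ge0_ler_powR; rewrite ?nnegrE; lra.
by rewrite powRM // ler_pM2l ?powR_gt0 // lerDr powR_ge0.
Qed.

End ereal_powers.

(** * Dyadic bounds *)

Section dyadic.
Context {R : realType}.
Local Notation h := ((2 : R)^-1)%R.

Lemma exists_half_pow_lt (e : R) : (0 < e)%R -> exists n, (h ^+ n < e)%R.
Proof.
move=> e0; exists (Num.bound e^-1); set n := Num.bound _.
have en : (e^-1 < n%:R)%R by apply: archi_boundP; rewrite invr_ge0 ltW.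
have n2 : (n%:R <= (2 : R) ^+ n)%R by rewrite -natrX ler_nat ltnW // ltn_expl.
rewrite exprVn -invf_plt ?posrE ?exprn_gt0 //; exact: lt_le_trans en n2.
Qed.

Lemma esum_half_pow : esum setT (fun k : nat => (h ^+ k.+1)%:E) = 1.
Proof.
rewrite -nneseries_esumT; last by move=> k; rewrite lee_fin exprn_ge0 // invr_ge0.
have := @cvg_geometric_eseries_half R 1 0; rewrite expr0 divr1.
have -> : (fun k => (1 / (2 ^ (k + 1))%:R)%:E) = (fun k => (h ^+ k.+1)%:E).
  by apply/funext => k; rewrite addn1 natrX exprVn div1r.
by move/cvg_lim => <-.
Qed.

Definition dyadic_weight (p : R) (n : nat) : \bar R := (((2 : R) ^+ n.+1) `^ p)%:E.

Lemma dyadic_weight_ge0 p n : 0 <= dyadic_weight p n.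
Proof. by rewrite lee_fin powR_ge0. Qed.

(* Small enough to beat the dyadic weights, see [dyadic_weight_rho_le]. *)
Definition rho (j : nat) : R := h ^+ (4 * j + 4).

Lemma rho_gt0 j : (0 < rho j)%R.
Proof. by rewrite exprn_gt0 // invr_gt0. Qed.

Lemma half_pow_le m n : (m <= n)%N -> (h ^+ n <= h ^+ m)%R.
Proof. by move=> mn; rewrite ler_wiXn2l // ?invr_ge0 // invf_le1 // ler1n. Qed.

Lemma rho_le_half_pow j : (rho j <= h ^+ j)%R.
Proof. by apply: half_pow_le; lia. Qed.

Lemma dyadic_weight_rho_le (p : R) J : (1 <= p)%R ->
  esum setT (fun t => dyadic_weight p t * ((rho (t.-1 + J)) `^ p)%:E)
  <= (h ^+ J)%:E.
Proof.
move=> p1; have h0 : (0 <= h)%R by rewrite invr_ge0.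
apply: (@le_trans _ _ (esum setT (fun t => (h ^+ J)%:E * (h ^+ t.+1)%:E))).
  apply: le_esum => t _; rewrite /dyadic_weight /rho -!EFinM lee_fin.
  set e := (4 * (t.-1 + J) + 4)%N.
  have te : (t.+1 <= e)%N by rewrite /e; lia.
  rewrite -powRM ?exprn_ge0 // -{1}(subnKC te) exprD mulrA -exprMn mulfV //.
  rewrite expr1n mul1r -exprD.
  have ha : (0 < h ^+ (e - t.+1) <= 1)%R.
    by rewrite exprn_gt0 ?invr_gt0 //= exprn_ile1 // invf_le1 // ler1n.
  by apply: le_trans (ge1r_powR ha p1) _; apply: half_pow_le; rewrite /e; lia.
apply: le_trans (@esumZl_le _ nat setT (fun t => (h ^+ t.+1)%:E) _ (exprn_ge0 J h0) _) _.
  by move=> t; rewrite lee_fin exprn_ge0.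
by rewrite esum_half_pow mule1.
Qed.

End dyadic.

Section sequences.
Context {R : realType} {T : Type} (D : T -> T -> \bar R).

Lemma cauchy_seq_modulus (u : nat -> T) (eps : nat -> R) :
  cauchy_seq D u -> (forall j, 0 < eps j)%R ->
  exists2 k : nat -> nat, (forall j, k j <= k j.+1)%N &
    forall j n n', (k j <= n)%N -> (k j <= n')%N -> D (u n) (u n') < (eps j)%:E.
Proof.
move=> cu eps0; have /choice[N NP] : forall j, exists N, forall n n',
    (N <= n)%N -> (N <= n')%N -> D (u n) (u n') < (eps j)%:E.
  by move=> j; exact: cu.
exists (fun j => \max_(i < j.+1) N i)%N.
  by move=> j; rewrite [X in (_ <= X)%N]big_ord_recr /= leq_maxl.
move=> j n n' jn jn'; have Nj := @leq_bigmax _ (fun i : 'I_j.+1 => N i) ord_max.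
by apply: NP; [exact: leq_trans Nj jn | exact: leq_trans Nj jn'].
Qed.

Lemma converges_to_shift (x y : nat -> T) l n1 n2 :
  (forall t, x (t + n1)%N = y (t + n2)%N) -> converges_to D x l -> converges_to D y l.
Proof.
move=> xy cx e e0; have [N NP] := cx e e0; exists (N + n2)%N => n Nn.
by rewrite -(subnK (leq_trans (leq_addl N n2) Nn)) -xy; apply: NP; lia.
Qed.

End sequences.
Arguments cauchy_seq_modulus {R T D u eps}.
Arguments converges_to_shift {R T D x y l n1 n2}.

(** * Matchings in a metric pair *)

Section metric_pair.
Context {R : realType} {X : Type} (d : X -> X -> \bar R) (A : set X) (p : R).
Hypothesis d_metric : is_metric d.
Hypothesis p_gt0 : (0 < p)%R.
Local Notation h := ((2 : R)^-1)%R.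

Let d_ge0 x y : 0 <= d x y. Proof. by case: d_metric. Qed.
Let d_xx x : d x x = 0. Proof. by case: d_metric. Qed.
Let d_sym x y : d x y = d y x. Proof. by case: d_metric. Qed.
Let d_tri x y z : d x z <= d x y + d y z. Proof. by case: d_metric. Qed.
Let p_neq0 : p != 0%R. Proof. exact: lt0r_neq0. Qed.
Let pow_d_ge0 x y : 0 <= d x y `^ p. Proof. exact: poweR_ge0. Qed.
Let pV_gt0 : (0 < p^-1)%R. Proof. by rewrite invr_gt0. Qed.

Definition pcost_sum (a b : @fsum X) (m : @matching_data X) : \bar R :=
  esum (mK m) (fun k => d (fpt a k) (fpt b (mphi m k)) `^ p)
  + esum (fidx a `\` mK m) (fun i => d (fpt a i) (mz m i) `^ p)
  + esum (fidx b `\` (mphi m @` mK m)) (fun j => d (mw m j) (fpt b j) `^ p).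

Lemma pcost_sum_ge0 a b m : 0 <= pcost_sum a b m.
Proof. by rewrite !adde_ge0 // esum_ge0. Qed.

Lemma Wp_le_pcost_sum a b m :
  is_matching A a b m -> Wp d A p a b <= pcost_sum a b m `^ p^-1.
Proof. by move=> abm; apply: ereal_inf_lbound; exists m. Qed.
Arguments Wp_le_pcost_sum {a b m}.

Lemma Wp_lt_matching a b (e : R) : (0 < e)%R -> Wp d A p a b < e%:E ->
  exists2 m, is_matching A a b m & pcost_sum a b m < (e `^ p)%:E.
Proof.
move=> e0 /ereal_inf_lt [_ [m abm <-]] lt_e; exists m => //.
rewrite -(ltr_poweR _ _ _ pV_gt0) ?pcost_sum_ge0 ?lee_fin ?powR_ge0 //.
by rewrite poweR_EFin -powRrM mulfV // powRr1 // ltW.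
Qed.
Arguments Wp_lt_matching {a b e}.

Lemma matching_Wp_lt a b m (e : R) : (0 < e)%R -> is_matching A a b m ->
  pcost_sum a b m < (e `^ p)%:E -> Wp d A p a b < e%:E.
Proof.
move=> e0 abm lt_e; apply: le_lt_trans (Wp_le_pcost_sum abm) _.
rewrite -(ltr_poweR _ _ _ p_gt0) ?poweR_ge0 ?lee_fin ?(ltW e0) //.
by rewrite poweRKV ?pcost_sum_ge0 // poweR_EFin.
Qed.

Lemma dist_set_ge0 x : 0 <= dist_set d x A.
Proof. by apply: le_ereal_inf_tmp => _ [a _ <-]. Qed.

Lemma dist_set_le x a : A a -> dist_set d x A <= d x a.
Proof. by move=> Aa; apply: ereal_inf_lbound; exists a. Qed.

Lemma dist_set_triangle x y : dist_set d y A <= d y x + dist_set d x A.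
Proof.
have [->|dyx] := eqVneq (d y x) +oo.
  by rewrite addye ?leey // gt_eqF // (lt_le_trans _ (dist_set_ge0 x)) ?ltNyr.
have fin : d y x \is a fin_num by rewrite ge0_fin_numE // ltey.
rewrite -leeBlDl //; apply: le_ereal_inf_tmp => _ [a Aa <-].
by rewrite leeBlDl //; apply: le_trans (dist_set_le y a Aa) _.
Qed.

Lemma cauchy_half_pow_steps (x : nat -> X) :
  (forall n, d (x n) (x n.+1) <= (h ^+ n)%:E) -> cauchy_seq d x.
Proof.
move=> step e e0.
have tele a t : d (x a) (x (t + a)%N) <= (2 * h ^+ a - 2 * h ^+ (t + a))%:E.
  elim: t => [|t IH]; first by rewrite add0n d_xx subrr.
  apply: le_trans (d_tri _ (x (t + a)%N) _) _; rewrite addSn.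
  apply: le_trans (leeD IH (step _)) _; rewrite -EFinD lee_fin exprS.
  have -> : (2 * (h * h ^+ (t + a)) = h ^+ (t + a))%R by rewrite mulrA mulfV ?mul1r.
  lra.
have [a ha] := @exists_half_pow_lt R (e / 4) (divr_gt0 e0 (ltr0Sn _ 3)).
exists a => m n am an; rewrite -(subnK am) -(subnK an).
apply: le_lt_trans (d_tri _ (x a) _) _; rewrite d_sym.
apply: le_lt_trans (leeD (tele a _) (tele a _)) _; rewrite -EFinD lte_fin.
have h0 : (0 <= h)%R by rewrite invr_ge0.
have := exprn_ge0 (m - a + a) h0; have := exprn_ge0 (n - a + a) h0.
move: ha; rewrite ltr_pdivlMr //; lra.
Qed.

(* If the weighted sum is [c ^ p], each step is at most [2^-(n+1) c], so the
   steps from [x 0] add up to at most [c]. *)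
Lemma pow_dist_lim_le (x : nat -> X) (y : X) : converges_to d x y ->
  d (x 0%N) y `^ p
  <= esum setT (fun n => dyadic_weight p n * d (x n) (x n.+1) `^ p).
Proof.
move=> cvx; set S := esum _ _.
have [->|Sy] := eqVneq S +oo; first by rewrite leey.
have S0 : 0 <= S by apply: esum_ge0 => n _; rewrite mule_ge0 ?dyadic_weight_ge0 ?poweR_ge0.
pose c := ((fine S) `^ p^-1)%R.
have SE : S = (c `^ p)%:E.
  by rewrite -powRrM mulVf // powRr1 ?fineK ?ge0_fin_numE ?ltey // fine_ge0.
have step n : d (x n) (x n.+1) <= ((h ^+ n.+1) * c)%:E.
  have w0 : (0 <= (2 : R) ^+ n.+1)%R by rewrite exprn_ge0.
  rewrite exprVn EFinM lee_pdivlMl ?exprn_gt0 //.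
  rewrite -(ler_poweR _ _ _ p_gt0) ?mule_ge0 ?lee_fin ?powR_ge0 //.
  rewrite poweRM ?lee_fin // !poweR_EFin -SE.
  by apply: esum_ge_term => // j _; rewrite mule_ge0 ?dyadic_weight_ge0 ?poweR_ge0.
have chain n : d (x 0%N) (x n) <= (c - h ^+ n * c)%:E.
  elim: n => [|n IH]; first by rewrite d_xx expr0 mul1r subrr.
  apply: le_trans (d_tri _ (x n) _) _; apply: le_trans (leeD IH (step n)) _.
  rewrite -EFinD lee_fin exprS; have : (0 <= h ^+ n * c)%R.
    by rewrite mulr_ge0 ?exprn_ge0 ?invr_ge0 ?powR_ge0.
  set u := (h ^+ n * c)%R; rewrite -mulrA -/u; lra.
have dc : d (x 0%N) y <= c%:E.
  apply/lee_addgt0Pr => e e0; have [N HN] := cvx e e0.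
  apply: le_trans (d_tri _ (x N) _) _; apply: leeD; last exact/ltW/HN.
  apply: le_trans (chain N) _.
  by rewrite lee_fin gerBl // mulr_ge0 ?exprn_ge0 ?invr_ge0 ?powR_ge0.
by rewrite SE -poweR_EFin ler_poweR ?lee_fin ?powR_ge0.
Qed.
Arguments pow_dist_lim_le {x y}.

Lemma pcost_sum_lty_parts a b m : pcost_sum a b m < +oo ->
  [/\ esum (mK m) (fun k => d (fpt a k) (fpt b (mphi m k)) `^ p) < +oo,
      esum (fidx a `\` mK m) (fun i => d (fpt a i) (mz m i) `^ p) < +oo &
      esum (fidx b `\` (mphi m @` mK m)) (fun j => d (mw m j) (fpt b j) `^ p) < +oo].
Proof.
have S0 (I : set nat) (f g : nat -> X) : 0 <= esum I (fun k => d (f k) (g k) `^ p).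
  exact: esum_ge0.
rewrite /pcost_sum => fin; split; apply: le_lt_trans fin.
- by rewrite -addeA leeDl ?adde_ge0.
- by rewrite -addeA addeC -addeA leeDl ?adde_ge0.
- by rewrite leeDr ?adde_ge0.
Qed.
Arguments pcost_sum_lty_parts {a b m}.

Lemma Wp_zero_lty (a : @fsum X) (z : nat -> X) : (forall i, fidx a i -> A (z i)) ->
  esum (fidx a) (fun i => d (fpt a i) (z i) `^ p) < +oo -> Wp d A p a (fsum_zero a) < +oo.
Proof.
move=> zA fin; have am : is_matching A a (fsum_zero a) (MData set0 id z z).
  by split => //= i ai _; exact: zA.
apply: le_lt_trans (Wp_le_pcost_sum am) _; apply: poweR_lty.
by rewrite /pcost_sum /= setD0 set0D !esum_set0 add0e adde0.
Qed.

Lemma Wp_zero_lty_diag (a : @fsum X) : Wp d A p a (fsum_zero a) < +oo ->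
  exists2 z : nat -> X, (forall i, fidx a i -> A (z i)) &
    esum (fidx a) (fun i => d (fpt a i) (z i) `^ p) < +oo.
Proof.
move=> /ereal_inf_lt[_ [m am <-]] /(lty_poweRy (invr_neq0 p_neq0)) fin.
have K0 i : ~ mK m i by case: am => _ mK0 _ _ _ /mK0.
exists (mz m); first by move=> i ai; case: am => _ _ _ + _; apply.
have [_ fin2 _] := pcost_sum_lty_parts fin; apply: le_lt_trans fin2.
by apply: subset_le_esum => // i ai; split.
Qed.

Section matching_of_finite_cost.
Variables (a b : @fsum X) (m : @matching_data X).
Hypothesis abm : is_matching A a b m.
Hypothesis cost_lty : pcost_sum a b m < +oo.

Lemma matched_dist_lty k : mK m k -> d (fpt a k) (fpt b (mphi m k)) < +oo.
Proof.
move=> Kk; have [fin _ _] := pcost_sum_lty_parts cost_lty.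
by apply: lty_poweRy p_neq0 _; exact: esum_lty_term (fun j _ => pow_d_ge0 _ _) Kk fin.
Qed.

Lemma unmatched_dist_lty j : fidx b j -> ~ (mphi m @` mK m) j -> d (mw m j) (fpt b j) < +oo.
Proof.
move=> Bj nim; have [_ _ fin] := pcost_sum_lty_parts cost_lty.
apply: lty_poweRy p_neq0 _.
exact: esum_lty_term (fun j _ => pow_d_ge0 _ _) (conj Bj nim) fin.
Qed.

Lemma upper_part_image : fidx (u_part d A +oo b) `<=` mphi m @` fidx (u_part d A +oo a).
Proof.
move=> j [Bj far]; have [[k Kk ekj]|nim] := pselect ((mphi m @` mK m) j).
  subst j; exists k => //; split; first by case: abm => + _ _ _ _; apply.
  move=> near; apply: far; apply: le_lt_trans (dist_set_triangle (fpt a k) _) _.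
  by rewrite d_sym; apply: lte_add_pinfty => //; exact: matched_dist_lty.
case: far; apply: le_lt_trans (dist_set_le _ (mw m j) _) _.
  by case: abm => _ _ _ _; apply.
by rewrite d_sym; exact: unmatched_dist_lty.
Qed.

Let pre j := xget 0%N [set k | mK m k /\ mphi m k = j].

Let preP j : (mphi m @` mK m) j -> mK m (pre j) /\ mphi m (pre j) = j.
Proof.
by move=> [k Kk e]; apply: (@xgetPex _ 0%N [set k | mK m k /\ mphi m k = j]); exists k.
Qed.

Lemma preimage_lower j : in_Dbar A a -> fidx (l_part d A +oo b) j ->
  (mphi m @` mK m) j -> fidx (l_part d A +oo a) (pre j).
Proof.
move=> Da [Bj [near _]] im; have [Kk ek] := preP _ im; split.
  by case: abm => + _ _ _ _; apply.
split; last by apply: Da; case: abm => + _ _ _ _; apply.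
apply: le_lt_trans (dist_set_triangle (fpt b j) _) _.
by apply: lte_add_pinfty => //; rewrite -{2}ek; exact: matched_dist_lty.
Qed.

Lemma matched_lower_cost_lty (z : nat -> X) : in_Dbar A a ->
  esum (fidx (l_part d A +oo a)) (fun i => d (fpt a i) (z i) `^ p) < +oo ->
  esum (fidx (l_part d A +oo b) `&` (mphi m @` mK m))
    (fun j => d (fpt b j) (z (pre j)) `^ p) < +oo.
Proof.
move=> Da zfin; pose c := ((2 : R) `^ p)%R.
apply: (@le_lt_trans _ _ (esum (mK m `&` fidx (l_part d A +oo a))
  (fun k => c%:E * (d (fpt a k) (fpt b (mphi m k)) `^ p + d (fpt a k) (z k) `^ p)))).
  apply: (le_esum_inj _ _ pre).
  - by move=> k _; rewrite mule_ge0 ?lee_fin ?powR_ge0 ?adde_ge0.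
  - move=> j j' /set_mem[_ im] /set_mem[_ im'] e.
    by rewrite -(preP _ im).2 -(preP _ im').2 e.
  - move=> j [Lj im]; have [Kk ek] := preP _ im.
    split; first by split => //; exact: preimage_lower.
    rewrite ek; apply: le_trans _ (poweRD_le _ _ _ p_gt0 (d_ge0 _ _) (d_ge0 _ _)).
    by rewrite ler_poweR ?adde_ge0 // [d (fpt a _) (fpt b _)]d_sym; exact: d_tri.
apply: le_lt_trans (esumZl_le _ _ _ (powR_ge0 _ _) _) _; first by move=> k; rewrite adde_ge0.
rewrite lte_mul_pinfty ?lee_fin ?powR_ge0 // esumD //; apply: lte_add_pinfty.
  have [fin _ _] := pcost_sum_lty_parts cost_lty.
  by apply: le_lt_trans fin; apply: subset_le_esum => // k [].
by apply: le_lt_trans zfin; apply: subset_le_esum => // k [].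
Qed.

Lemma lower_part_lty : in_Dbar A a ->
  Wp d A p (l_part d A +oo a) (fsum_zero (l_part d A +oo a)) < +oo ->
  Wp d A p (l_part d A +oo b) (fsum_zero (l_part d A +oo b)) < +oo.
Proof.
move=> Da /Wp_zero_lty_diag[z zA zfin]; pose img := mphi m @` mK m.
pose zb j := if `[< img j >] then z (pre j) else mw m j.
apply: (Wp_zero_lty _ zb).
  move=> j Lj; rewrite /zb; case: asboolP => im.
    exact: zA (preimage_lower _ Da Lj im).
  by case: abm Lj => _ _ _ _ + [Bj _]; apply.
rewrite (esumID img) //; apply: lte_add_pinfty.
  apply: le_lt_trans (matched_lower_cost_lty _ Da zfin).
  by apply: le_esum => j [_ im]; rewrite /zb asboolT.
have [_ _ fin] := pcost_sum_lty_parts cost_lty; apply: le_lt_trans fin.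
apply: (le_esum_inj _ _ id) => // j [[Bj _] nim]; split => //.
by rewrite /zb asboolF // d_sym.
Qed.

End matching_of_finite_cost.

Lemma Dp_of_matching a b m : Dp d A p a -> in_Dbar A b -> is_matching A a b m ->
  pcost_sum a b m < +oo -> Dp d A p b.
Proof.
move=> [Da [Ua La]] Db abm fin; split => //; split.
  exact: sub_finite_set (upper_part_image _ _ _ abm fin) (finite_image _ Ua).
exact: lower_part_lty _ _ _ abm fin Da La.
Qed.

(** * Chains along a sequence of matchings *)

Section chains.
Variables (G : nat -> @fsum X) (M : nat -> @matching_data X).

Inductive chain_state := Alive of nat | Dead of X.

Definition advance n (s : chain_state) : chain_state :=
  if s is Alive j then
    if `[< mK (M n) j >] then Alive (mphi (M n) j) else Dead (mz (M n) j)
  else s.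

(* Before its birth at level [o.1], the chain [o] sits at the diagonal point
   paired with its newborn point [o.2] by [M o.1.-1], so that its step at level
   [o.1.-1] is the cost of that pair. *)
Fixpoint chain (o : nat * nat) (n : nat) : chain_state :=
  if n is n'.+1 then
    if (n < o.1)%N then Dead (mw (M o.1.-1) o.2)
    else if n == o.1 then Alive o.2 else advance n' (chain o n')
  else if o.1 == 0%N then Alive o.2 else Dead (mw (M o.1.-1) o.2).

Definition locate n (s : chain_state) : X :=
  match s with Alive j => fpt (G n) j | Dead z => z end.

Definition chain_pt o n := locate n (chain o n).

Definition chain_step o n := d (chain_pt o n) (chain_pt o n.+1).

Definition births : set (nat * nat) :=
  [set o | fidx (G o.1) o.2 /\
           (o.1 = 0%N \/ ~ (mphi (M o.1.-1) @` mK (M o.1.-1)) o.2)].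

Definition survives o := forall n, (o.1 <= n)%N -> exists j, chain o n = Alive j.

Definition alive_part n (P : set nat) (g : nat -> \bar R) o : \bar R :=
  if chain o n is Alive j then (if `[< P j >] then g j else 0) else 0.

Lemma alive_part_ge0 n P g o : (forall j, 0 <= g j) -> 0 <= alive_part n P g o.
Proof. by move=> g0; rewrite /alive_part; case: (chain o n) => // j; case: ifP. Qed.

Lemma chain_before o n : (n < o.1)%N -> chain o n = Dead (mw (M o.1.-1) o.2).
Proof. by case: n => [|n] /= lt; [rewrite gtn_eqF | rewrite lt]. Qed.
Arguments chain_before {o n}.

Lemma chain_birth o : chain o o.1 = Alive o.2.
Proof. by case: o => [[|b] i] //=; rewrite ltnn eqxx. Qed.

Lemma chain_succ o n : (o.1 <= n)%N -> chain o n.+1 = advance n (chain o n).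
Proof.
move=> bn /=; rewrite ltnNge (leq_trans bn (leqnSn n)) /=.
by rewrite (gtn_eqF (leq_ltn_trans bn (ltnSn n))).
Qed.
Arguments chain_succ {o n}.

Lemma chain_alive_ge o n j : chain o n = Alive j -> (o.1 <= n)%N.
Proof. by case: (ltnP n o.1) => // /chain_before ->. Qed.
Arguments chain_alive_ge {o n j}.

Lemma chain_aliveS o n j : chain o n.+1 = Alive j ->
  (o.1 = n.+1 /\ o.2 = j) \/
  exists2 i, chain o n = Alive i & [/\ (o.1 <= n)%N, mK (M n) i & mphi (M n) i = j].
Proof.
move=> e; have := chain_alive_ge e; rewrite leq_eqVlt => /orP[/eqP b|].
  by left; move: e; rewrite -b chain_birth => -[].
rewrite ltnS => bn; right; move: e; rewrite chain_succ //.
by case: (chain o n) => [i|z] //=; case: asboolP => // Ki [<-]; exists i.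
Qed.

Lemma chain_dead_stays o n z : (o.1 <= n)%N -> chain o n = Dead z ->
  forall k, chain o (k + n) = Dead z.
Proof.
move=> bn e; elim => [|k IH] //.
by rewrite addSn chain_succ ?IH // (leq_trans bn) // leq_addl.
Qed.
Arguments chain_dead_stays {o n z}.

Section chains_of_matchings.
Hypothesis M_matching : forall n, is_matching A (G n) (G n.+1) (M n).

Lemma chain_alive_fidx o n j : births o -> chain o n = Alive j -> fidx (G n) j.
Proof.
case: o => b i [/= Gi _]; elim: n j => [|n IH] j e.
  by have := chain_alive_ge e; rewrite leqn0 => /eqP /= b0; move: e Gi; rewrite b0 => -[<-].
case/chain_aliveS: e => [[/= <- <-] //|[k /IH Gk [_ Kk <-]]].
by case: (M_matching n) => _ + _ _ _; apply.
Qed.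
Arguments chain_alive_fidx {o n j}.

Lemma chain_alive_inj o o' n j : births o -> births o' ->
  chain o n = Alive j -> chain o' n = Alive j -> o = o'.
Proof.
case: o o' => [b i] [b' i'] Bo Bo'; elim: n j => [|n IH] j.
  by case: b Bo => [|b] Bo; case: b' Bo' => [|b'] Bo' //= [->] [->].
case/chain_aliveS => [[/= eb ei]|[k ek [_ Kk kj]]];
  case/chain_aliveS => [[/= eb' ei']|[k' ek' [_ Kk' kj']]].
- by rewrite eb eb' ei ei'.
- case: Bo => _ /= [|]; first by rewrite eb.
  by rewrite eb /=; case; exists k'; rewrite // kj' -ei.
- case: Bo' => _ /= [|]; first by rewrite eb'.
  by rewrite eb' /=; case; exists k; rewrite // kj -ei'.
- apply: (IH k) ek _; suff -> : k = k' by [].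
  by case: (M_matching n) => _ _ inj _ _; apply: inj; rewrite ?inE // kj kj'.
Qed.
Arguments chain_alive_inj {o o' n j}.

Lemma chain_dead_in_A o n z : births o -> (o.1 <= n)%N -> chain o n = Dead z -> A z.
Proof.
move=> Bo; elim: n z => [|n IH] z; first by rewrite leqn0 => /eqP b0; rewrite -b0 chain_birth.
rewrite leq_eqVlt => /orP[/eqP b|]; first by rewrite -b chain_birth.
rewrite ltnS => bn; rewrite chain_succ //; case E: (chain o n) => [j|z'] /=.
  case: asboolP => // Kj [<-]; have Gj := chain_alive_fidx Bo E.
  by case: (M_matching n) => _ _ _ + _; apply.
by move=> [<-]; exact: IH E.
Qed.
Arguments chain_dead_in_A {o n z}.

Lemma chain_through n j : fidx (G n) j -> exists2 o, births o & chain o n = Alive j.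
Proof.
elim: n j => [|n IH] j Gj; first by exists (0%N, j); split => //; left.
have [[i Ki <-]|nim] := pselect ((mphi (M n) @` mK (M n)) j).
  have [u Bu e] : exists2 u, births u & chain u n = Alive i.
    by apply: IH; case: (M_matching n) => + _ _ _ _; apply.
  by exists u; rewrite // chain_succ ?(chain_alive_ge e) // e /= asboolT.
by exists (n.+1, j); [split => //; right | exact: chain_birth].
Qed.

Lemma dead_chain_cvg o n z : births o -> (o.1 <= n)%N -> chain o n = Dead z ->
  A z /\ converges_to d (chain_pt o) z.
Proof.
move=> Bo bn e; split; first exact: chain_dead_in_A Bo bn e.
move=> eps eps0; exists n => k nk; rewrite /chain_pt -(subnK nk).
by rewrite (chain_dead_stays bn e) /= d_xx.
Qed.

Lemma esum_alive_part_le (P : set nat) (g : nat -> \bar R) n :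
  (forall j, 0 <= g j) -> esum births (alive_part n P g) <= esum (fidx (G n) `&` P) g.
Proof.
move=> g0; pose idx o := if chain o n is Alive j then j else 0%N.
rewrite (esum_setI_supp [set o | exists2 j, chain o n = Alive j & P j]); last first.
  move=> o _ nQ; rewrite /alive_part; case E: (chain o n) => [j|//].
  by case: asboolP => // Pj; case: nQ; exists j.
apply: (le_esum_inj _ _ idx) => //.
- move=> o o' /set_mem[Bo [j e _]] /set_mem[Bo' [j' e' _]].
  by rewrite /idx e e' => jj'; apply: (chain_alive_inj Bo Bo' e); rewrite e' jj'.
- move=> o [Bo [j e Pj]]; rewrite /idx /alive_part e asboolT //.
  by split => //; split => //; exact: chain_alive_fidx Bo e.
Qed.

(* At level [n] every chain uses one pair of [M n] (matched, sent to the
   diagonal, or born from it), and distinct chains use distinct pairs. *)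
Lemma esum_chain_step_le n :
  esum births (fun o => chain_step o n `^ p) <= pcost_sum (G n) (G n.+1) (M n).
Proof.
set g1 := fun k => d (fpt (G n) k) (fpt (G n.+1) (mphi (M n) k)) `^ p.
set g2 := fun i => d (fpt (G n) i) (mz (M n) i) `^ p.
set g3 := fun j => d (mw (M n) j) (fpt (G n.+1) j) `^ p.
pose f1 := alive_part n (mK (M n)) g1; pose f2 := alive_part n (~` mK (M n)) g2.
pose f3 o := if o.1 == n.+1 then g3 o.2 else 0.
have f10 o : 0 <= f1 o by apply: alive_part_ge0 => j; exact: pow_d_ge0.
have f20 o : 0 <= f2 o by apply: alive_part_ge0 => j; exact: pow_d_ge0.
have f30 o : 0 <= f3 o by rewrite /f3; case: ifP => // _; exact: pow_d_ge0.
have step_le o : chain_step o n `^ p <= f1 o + f2 o + f3 o.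
  rewrite /chain_step /chain_pt /f1 /f2 /f3 /alive_part; have [bn|nb] := leqP o.1 n.
    rewrite (chain_succ bn) (ltn_eqF (leq_ltn_trans bn (ltnSn n))) adde0.
    case: (chain o n) => [j|z] /=; last by rewrite d_xx poweR0r // adde_ge0.
    case: asboolP => Kj /=.
      by rewrite asboolF ?adde0 // => /(_ Kj).
    by rewrite asboolT // add0e.
  rewrite (chain_before nb); move: nb; rewrite leq_eqVlt => /orP[/eqP eb|nb].
    by case: o eb => b i /= <-; rewrite ltnn eqxx !add0e.
  by rewrite (chain_before nb) (gtn_eqF nb) d_xx poweR0r // !adde0.
apply: le_trans (le_esum (fun o _ => step_le o)) _.
rewrite !esumD //; last by move=> o _; rewrite adde_ge0.
apply: leeD; [apply: leeD|].
- rewrite -[X in _ <= esum X _](@setIidr _ (fidx (G n)) (mK (M n))).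
    exact: (esum_alive_part_le _ g1 _ (fun j => pow_d_ge0 _ _)).
  by case: (M_matching n).
- by rewrite setDE; exact: (esum_alive_part_le _ g2 _ (fun j => pow_d_ge0 _ _)).
- rewrite (esum_setI_supp [set o | o.1 = n.+1]); last first.
    by move=> o _ /eqP/negbTE; rewrite /f3 => ->.
  apply: (le_esum_inj _ _ snd) => //.
    by move=> [b i] [b' i'] /set_mem[_ /= ->] /set_mem[_ /= ->] /= ->.
  move=> [b i] [[/= Gi Bi] /= eb]; subst b; rewrite /f3 /= eqxx.
  by split => //; split => //; case: Bi.
Qed.

Definition chain_wsum o := esum setT (fun n => dyadic_weight p n * chain_step o n `^ p).

Lemma chain_wsum_ge0 o : 0 <= chain_wsum o.
Proof. by apply: esum_ge0 => n _; rewrite mule_ge0 ?dyadic_weight_ge0 ?poweR_ge0. Qed.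

Lemma esum_chain_wsum_le (T : nat -> \bar R) :
  (forall n, pcost_sum (G n) (G n.+1) (M n) <= T n) ->
  esum births chain_wsum <= esum setT (fun n => dyadic_weight p n * T n).
Proof.
move=> costT; rewrite /chain_wsum esum_interchange; last first.
  by move=> *; rewrite mule_ge0 ?dyadic_weight_ge0 ?poweR_ge0.
apply: le_esum => n _.
apply: le_trans (esumZl_le _ _ _ (powR_ge0 _ _) (fun o => poweR_ge0 _ _)) _.
apply: lee_wpmul2l; first exact: dyadic_weight_ge0.
exact: le_trans (esum_chain_step_le n) (costT n).
Qed.

Section matching_to_limits.
Variables (beta : @fsum X) (origin : nat -> nat * nat).
Hypothesis origin_inj : set_inj (fidx beta) origin.
Hypothesis origin_births : forall y, fidx beta y -> births (origin y).
Hypothesis origin_cvg :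
  forall y, fidx beta y -> converges_to d (chain_pt (origin y)) (fpt beta y).
Hypothesis survivors_to_A : forall x, fidx (G 0) x -> ~ (origin @` fidx beta) (0%N, x) ->
  survives (0%N, x) -> exists2 z, A z & converges_to d (chain_pt (0%N, x)) z.

Let matched := [set x | fidx (G 0) x /\ (origin @` fidx beta) (0%N, x)].
Let partner x := xget 0%N [set y | fidx beta y /\ origin y = (0%N, x)].

Let partnerP x : matched x -> fidx beta (partner x) /\ origin (partner x) = (0%N, x).
Proof.
move=> [_ [y By e]].
by apply: (@xgetPex _ 0%N [set y | fidx beta y /\ origin y = (0%N, x)]); exists y.
Qed.

Lemma unmatched_limits : exists z : nat -> X, forall x, fidx (G 0) x -> ~ matched x ->
  A (z x) /\ converges_to d (chain_pt (0%N, x)) (z x).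
Proof.
suff: forall x, exists z, fidx (G 0) x -> ~ matched x ->
    A z /\ converges_to d (chain_pt (0%N, x)) z.
  by case/choice => z zP; exists z.
move=> x; have [[Gx nm]|nGx] := pselect (fidx (G 0) x /\ ~ matched x); last first.
  by exists (fpt (G 0) x) => Gx nm; case: nGx.
have [sv|nsv] := pselect (survives (0%N, x)).
  have [|z Az cz] := survivors_to_A x Gx _ sv; last by exists z.
  by move=> im; apply: nm.
have [n nal] : exists n, forall j, chain (0%N, x) n <> Alive j.
  apply: contra_notP nsv => nex n _; apply: contra_notP nex => nal.
  by exists n => j e; apply: nal; exists j.
case E: (chain (0%N, x) n) => [j|z]; first by case: (nal j).
by exists z => _ _; apply: dead_chain_cvg E => //; split => //; left.
Qed.

(* A point of [G 0] goes to the limit of its chain, or to a diagonal point [z x]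
   when its chain dies or converges to [A]; a point of [beta] left over is the
   limit of a chain born later, which starts on the diagonal. *)
Let lim_matching z := MData matched partner z (fun y => chain_pt (origin y) 0).

Lemma origin_unmatched y : fidx beta y -> ~ (partner @` matched) y -> (origin y).1 <> 0%N.
Proof.
move=> By nim b0; apply: nim; have mx : matched (origin y).2.
  split; first by case: (origin_births y By); rewrite b0.
  by exists y; rewrite // -b0 -surjective_pairing.
exists (origin y).2 => //; have [Bp ep] := partnerP _ mx.
by apply: origin_inj; rewrite ?inE // ep -b0 -surjective_pairing.
Qed.

Lemma lim_matching_is_matching z :
  (forall x, fidx (G 0) x -> ~ matched x -> A (z x)) ->
  is_matching A (G 0%N) beta (lim_matching z).
Proof.
move=> zA; split => //=.
- by move=> x [].
- by move=> x /(partnerP _)[].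
- move=> x x' /set_mem mx /set_mem mx' e.
  have [_ e1] := partnerP _ mx; have [_ e2] := partnerP _ mx'.
  by move: e1 e2; rewrite e => -> [].
- move=> y By nim; have b0 := origin_unmatched _ By nim.
  have [] := origin_births y By; rewrite /chain_pt.
  case: (origin y) b0 => [[//|b] i] _ /= Gi [//|nimy].
  by case: (M_matching b) => _ _ _ _; apply.
Qed.

Lemma lim_matching_cost z :
  (forall x, fidx (G 0) x -> ~ matched x -> converges_to d (chain_pt (0%N, x)) (z x)) ->
  pcost_sum (G 0%N) beta (lim_matching z) <= esum births chain_wsum.
Proof.
move=> zcvg; have w0 o := chain_wsum_ge0 o.
rewrite (esumID [set o | o.1 = 0%N] births chain_wsum (fun o _ => w0 o)).
rewrite (esumID [set o | matched o.2] _ chain_wsum (fun o _ => w0 o)).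
apply: leeD; [apply: leeD|].
- apply: (le_esum_inj _ _ (fun x => (0%N, x))) => //; first by move=> x x' _ _ [].
  move=> x mx; have [Bp ep] := partnerP _ mx.
  split; first by split => //; split => //; split => //; [case: mx | left].
  by have := pow_dist_lim_le (origin_cvg _ Bp); rewrite ep.
- apply: (le_esum_inj _ _ (fun x => (0%N, x))) => //; first by move=> x x' _ _ [].
  move=> x [Gx nm]; split; first by split => //; split => //; split => //; left.
  exact: pow_dist_lim_le (zcvg x Gx nm).
- apply: (le_esum_inj _ _ origin) => //.
    by move=> y y' /set_mem[By _] /set_mem[By' _]; apply: origin_inj; rewrite inE.
  move=> y [By nim].
  split; first by split; [exact: origin_births y By | exact: (origin_unmatched y)].
  exact: pow_dist_lim_le (origin_cvg y By).
Qed.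

Lemma matching_to_limits (T : nat -> \bar R) :
  (forall n, pcost_sum (G n) (G n.+1) (M n) <= T n) ->
  exists2 m, is_matching A (G 0%N) beta m &
    pcost_sum (G 0%N) beta m <= esum setT (fun n => dyadic_weight p n * T n).
Proof.
move=> costT; have [z zP] := unmatched_limits; exists (lim_matching z).
  by apply: lim_matching_is_matching => x Gx nm; case: (zP x Gx nm).
apply: le_trans _ (esum_chain_wsum_le _ costT).
by apply: lim_matching_cost => x Gx nm; case: (zP x Gx nm).
Qed.

End matching_to_limits.

End chains_of_matchings.

End chains.
Arguments chain_alive_ge {M o n j}.
Arguments chain_dead_stays {M o n z}.
Arguments chain_alive_fidx {G M} M_matching {o n j}.
Arguments chain_alive_inj {G M} M_matching {o o' n j}.
Arguments chain_through {G M} M_matching {n j}.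

Lemma chain_tail_eq (M1 M2 : nat -> @matching_data X) o1 o2 n1 n2 :
  (o1.1 <= n1)%N -> (o2.1 <= n2)%N -> (forall t, M1 (t + n1)%N = M2 (t + n2)%N) ->
  chain M1 o1 n1 = chain M2 o2 n2 ->
  forall t, chain M1 o1 (t + n1) = chain M2 o2 (t + n2).
Proof.
move=> b1 b2 M12 e; elim => [|t IH] //.
rewrite !addSn !chain_succ ?(leq_trans _ (leq_addl t _)) //.
by rewrite IH /advance M12.
Qed.
Arguments chain_tail_eq {M1 M2 o1 o2 n1 n2}.

Lemma chain_pt_tail_eq (G1 G2 : nat -> @fsum X) (M1 M2 : nat -> @matching_data X)
    o1 o2 n1 n2 :
  (o1.1 <= n1)%N -> (o2.1 <= n2)%N ->
  (forall t, G1 (t + n1)%N = G2 (t + n2)%N) -> (forall t, M1 (t + n1)%N = M2 (t + n2)%N) ->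
  chain M1 o1 n1 = chain M2 o2 n2 ->
  forall t, chain_pt G1 M1 o1 (t + n1) = chain_pt G2 M2 o2 (t + n2).
Proof.
move=> b1 b2 G12 M12 e t; rewrite /chain_pt (chain_tail_eq b1 b2 M12 e t).
by case: (chain M2 o2 (t + n2)) => //= j; rewrite G12.
Qed.

(** * The limit of a Cauchy sequence *)

Section limit_of_cauchy_sequence.
Variables (alpha : nat -> @fsum X) (k : nat -> nat).
Hypothesis k_cauchy : forall j n n', (k j <= n)%N -> (k j <= n')%N ->
  Wp d A p (alpha n) (alpha n') < (rho j)%:E.
Hypothesis k_mono : forall j, (k j <= k j.+1)%N.

Let gam j := alpha (k j).

Lemma exists_subsequence_matchings : exists m : nat -> @matching_data X, forall j,
  is_matching A (gam j) (gam j.+1) (m j) /\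
  pcost_sum (gam j) (gam j.+1) (m j) < ((rho j) `^ p)%:E.
Proof.
suff /choice[m mP] : forall j, exists mj, is_matching A (gam j) (gam j.+1) mj /\
    pcost_sum (gam j) (gam j.+1) mj < ((rho j) `^ p)%:E by exists m.
move=> j; have kj := k_cauchy _ _ _ (leqnn (k j)) (k_mono j).
by have [m jm mC] := Wp_lt_matching (rho_gt0 j) kj; exists m.
Qed.

Section chain_limits.
Variable m : nat -> @matching_data X.
Hypothesis m_spec : forall j, is_matching A (gam j) (gam j.+1) (m j) /\
  pcost_sum (gam j) (gam j.+1) (m j) < ((rho j) `^ p)%:E.
Let m_matching j := (m_spec j).1.

Lemma chain_step_le_rho o n : births gam m o -> chain_step gam m o n <= (rho n)%:E.
Proof.
move=> Bo; have r0 := ltW (@rho_gt0 R n).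
rewrite -(ler_poweR _ _ _ p_gt0) ?lee_fin ?d_ge0 // poweR_EFin.
apply: ltW; apply: le_lt_trans _ (m_spec n).2.
apply: le_trans _ (esum_chain_step_le _ _ m_matching n).
by apply: esum_ge_term Bo => o' _; exact: poweR_ge0.
Qed.

Lemma exists_chain_limits : complete d ->
  exists L : nat * nat -> X,
    forall o, births gam m o -> converges_to d (chain_pt gam m o) (L o).
Proof.
move=> dC; suff /choice[L LP] : forall o, exists l,
    births gam m o -> converges_to d (chain_pt gam m o) l by exists L.
move=> o; have [Bo|nBo] := pselect (births gam m o); last first.
  by exists (chain_pt gam m o 0%N).
have steps n : chain_step gam m o n <= (h ^+ n)%:E.
  by apply: le_trans (chain_step_le_rho _ n Bo) _; rewrite lee_fin rho_le_half_pow.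
have [l ol] := dC _ (cauchy_half_pow_steps _ steps).
by exists l.
Qed.

Section limit_point.
Variable L : nat * nat -> X.
Hypothesis L_lim : forall o, births gam m o -> converges_to d (chain_pt gam m o) (L o).

Definition lim_index : set nat :=
  [set c | exists o, [/\ c = pickle o, births gam m o, survives m o & ~ A (L o)]].

Let unpick (c : nat) : nat * nat := odflt (0%N, 0%N) (unpickle c).

Let unpickK o : unpick (pickle o) = o.
Proof. by rewrite /unpick pickleK. Qed.

Definition lim_fsum : @fsum X := FSum lim_index (fun c => L (unpick c)).

Lemma lim_fsum_Dbar : in_Dbar A lim_fsum.
Proof. by move=> _ [u [-> _ _ nA]]; rewrite /= unpickK. Qed.

Section approximation.
Variables (J n : nat) (m0 : @matching_data X).
Hypothesis m0_matching : is_matching A (alpha n) (gam J) m0.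
Hypothesis m0_cost : pcost_sum (alpha n) (gam J) m0 <= ((rho J) `^ p)%:E.

Let G' t := if t is t'.+1 then gam (t' + J) else alpha n.
Let M' t := if t is t'.+1 then m (t' + J) else m0.

Let M'_matching t : is_matching A (G' t) (G' t.+1) (M' t).
Proof. by case: t => [|t] //=; exact: m_matching. Qed.

Lemma shifted_chain_cvg u v s : births gam m u -> (u.1 <= s + J)%N -> (v.1 <= s.+1)%N ->
  chain m u (s + J) = chain M' v s.+1 -> converges_to d (chain_pt G' M' v) (L u).
Proof.
move=> Bu uJ vs e; apply: (converges_to_shift (n1 := s + J) (n2 := s.+1) _ (L_lim _ Bu)).
by apply: chain_pt_tail_eq => // t; rewrite addnS /= addnA.
Qed.

Lemma shifted_survives u v : births gam m u -> (u.1 <= J)%N -> (v.1 <= 1)%N ->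
  chain m u J = chain M' v 1 -> survives M' v -> survives m u.
Proof.
move=> Bu uJ v1 e sv t ut; have [Jt|tJ] := leqP J t.
  rewrite -(subnK Jt) (chain_tail_eq uJ v1 _ e); last by move=> t'; rewrite addn1.
  by apply: sv; rewrite (leq_trans v1) // leq_addl.
case E: (chain m u t) => [j|z]; first by exists j.
have [j ej] := sv 1%N v1; have := chain_dead_stays ut E (J - t).
by rewrite subnK ?(ltnW tJ) // e ej.
Qed.

Let pos u := if chain m u J is Alive j then j else 0%N.
Let pre j := xget 0%N [set x | mK m0 x /\ mphi m0 x = j].
Let preP j : (mphi m0 @` mK m0) j -> mK m0 (pre j) /\ mphi m0 (pre j) = j.
Proof.
by move=> [x Kx e]; apply: (@xgetPex _ 0%N [set x | mK m0 x /\ mphi m0 x = j]); exists x.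
Qed.

(* A limit chain born after level [J] keeps its birth; one alive at level [J]
   is reborn at level 1 or, if [m0] reaches it, at level 0 from its preimage. *)
Let rebirth u : nat * nat :=
  if (J < u.1)%N then ((u.1 - J).+1, u.2)
  else if `[< (mphi m0 @` mK m0) (pos u) >] then (0%N, pre (pos u)) else (1%N, pos u).

Let origin c := rebirth (unpick c).

Let posP u : survives m u -> (u.1 <= J)%N -> chain m u J = Alive (pos u).
Proof. by move=> sv uJ; have [j ej] := sv J uJ; rewrite /pos ej. Qed.

Lemma origin_births y : fidx lim_fsum y -> births G' M' (origin y).
Proof.
case=> -[b i] [-> Bu sv _]; rewrite /origin unpickK /rebirth /=; case: ltnP => [Jb|bJ].
  case: Bu => /= Gi [b0|nim]; first by rewrite b0 in Jb.
  have [s bs] : exists s : nat, b = (s.+1 + J)%N by exists (b - J.+1)%N; lia.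
  by subst b; rewrite addnK; split => //; right.
have ep := posP _ sv bJ; case: asboolP => im.
  by split; [case: m0_matching => + _ _ _ _; apply; case: (preP _ im) | left].
have := chain_alive_fidx m_matching Bu ep.
by split => /=; [rewrite add0n | right].
Qed.

Lemma origin_cvg y :
  fidx lim_fsum y -> converges_to d (chain_pt G' M' (origin y)) (fpt lim_fsum y).
Proof.
case=> u [-> Bu sv _]; rewrite /origin /= unpickK /rebirth; case: ltnP => [Ju|uJ].
  apply: (shifted_chain_cvg _ _ (u.1 - J)%N) => //; first by rewrite subnK // ltnW.
  by rewrite subnK ?(ltnW Ju) // !chain_birth.
have ep := posP _ sv uJ.
case: asboolP => im; apply: (shifted_chain_cvg _ _ 0) => //; rewrite add0n ep //=.
by have [Kx epre] := preP _ im; rewrite asboolT // epre.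
Qed.

Lemma origin_inj : set_inj (fidx lim_fsum) origin.
Proof.
move=> _ _ /set_mem[[b i] [-> Bu sv _]] /set_mem[[b' i'] [-> Bu' sv' _]].
rewrite /origin !unpickK /rebirth /= => e; congr pickle.
case: (ltnP J b) e => Jb; case: (ltnP J b') => Jb'.
- by case=> e1 ->; congr pair; lia.
- by case: asboolP => _ []; lia.
- by case: asboolP => _ []; lia.
move=> e; have ep := posP _ sv Jb; have ep' := posP _ sv' Jb'.
suff epos : pos (b, i) = pos (b', i').
  by apply: (chain_alive_inj m_matching Bu Bu' ep); rewrite ep' -epos.
move: e; case: asboolP => im; case: asboolP => im' /= -[epre] //.
by rewrite -(preP _ im).2 -(preP _ im').2 epre.
Qed.

Lemma shifted_survivors_to_A x : fidx (alpha n) x -> ~ (origin @` fidx lim_fsum) (0%N, x) ->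
  survives M' (0%N, x) -> exists2 z, A z & converges_to d (chain_pt G' M' (0%N, x)) z.
Proof.
move=> Gx nim sv; have [j1 e1] := sv 1%N isT.
have Kx : mK m0 x by move: e1 => /=; case: asboolP.
have e1' : chain M' (0%N, x) 1 = Alive (mphi m0 x) by rewrite /= asboolT.
have Gj : fidx (gam J) (mphi m0 x) by case: m0_matching => _ + _ _ _; apply.
have [u Bu eu] := chain_through m_matching Gj.
have uJ := chain_alive_ge eu; have eu1 : chain m u J = chain M' (0%N, x) 1 by rewrite eu e1'.
exists (L u); last by apply: (shifted_chain_cvg _ _ 0); rewrite ?add0n.
apply: contrapT => nA; apply: nim; exists (pickle u).
  by exists u; split => //; apply: shifted_survives Bu uJ _ eu1 sv.
rewrite /origin unpickK /rebirth ltnNge uJ /=.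
have -> : pos u = mphi m0 x by rewrite /pos eu.
rewrite asboolT; last by exists x.
have [Kp ep] := preP _ (ex_intro2 _ _ x Kx erefl); congr pair.
by case: m0_matching => _ _ inj _ _; apply: inj; rewrite ?inE.
Qed.

(* [t.-1] with [0.-1 = 0]: the first step [m0] and the next one [m J] are both
   bounded by [rho J]. *)
Lemma approx_matching : exists2 mm, is_matching A (alpha n) lim_fsum mm &
  pcost_sum (alpha n) lim_fsum mm
  <= esum setT (fun t => dyadic_weight p t * ((rho (t.-1 + J)) `^ p)%:E).
Proof.
apply: (matching_to_limits _ _ M'_matching _ _ origin_inj origin_births origin_cvg
  shifted_survivors_to_A) => -[|t] //=.
exact/ltW/(m_spec (t + J)).2.
Qed.

End approximation.

Lemma lim_fsum_approx : (1 <= p)%R -> forall J n, (k J <= n)%N ->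
  exists2 mm, is_matching A (alpha n) lim_fsum mm &
    pcost_sum (alpha n) lim_fsum mm <= (h ^+ J)%:E.
Proof.
move=> p1 J n kn.
have [m0 m0M /ltW m0C] := Wp_lt_matching (rho_gt0 J) (k_cauchy _ _ _ kn (leqnn (k J))).
have [mm mmM mmC] := approx_matching _ _ _ m0M m0C.
by exists mm => //; exact: le_trans mmC (dyadic_weight_rho_le _ J p1).
Qed.

End limit_point.
End chain_limits.
End limit_of_cauchy_sequence.

End metric_pair.

Theorem theorem6p9 (R : realType) (X : Type) (d : X -> X -> \bar R) (A : set X)
  (p : R) :
  is_metric d -> closed_in d A -> (1 <= p)%R ->
  complete d ->
  forall alpha : nat -> fsum,
    (forall n, Dp d A p (alpha n)) ->
    cauchy_seq (Wp d A p) alpha ->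
    exists2 beta : fsum, Dp d A p beta & converges_to (Wp d A p) alpha beta.
Proof.
move=> dm _ p1 dC alpha Dalpha cau; have p0 : (0 < p)%R := lt_le_trans ltr01 p1.
have [k k_mono k_cau] := cauchy_seq_modulus cau (@rho_gt0 R).
have [m m_spec] := exists_subsequence_matchings _ _ _ p0 _ _ k_cau k_mono.
have [L L_lim] := exists_chain_limits _ _ _ dm p0 _ _ _ m_spec dC.
have approx := lim_fsum_approx _ _ _ dm p0 _ _ k_cau _ m_spec _ L_lim p1.
exists (lim_fsum A alpha k m L).
  have [mm mmM mmC] := approx 0%N (k 0%N) (leqnn _).
  apply: Dp_of_matching dm p0 _ _ _ (Dalpha (k 0%N)) (lim_fsum_Dbar _ _ _ _ _) mmM _.
  by apply: le_lt_trans mmC _; rewrite ltry.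
move=> e e0; have [J hJ] := exists_half_pow_lt _ (powR_gt0 p e0).
exists (k J) => n kn; have [mm mmM mmC] := approx J n kn.
by apply: matching_Wp_lt p0 _ _ _ _ e0 mmM _; apply: le_lt_trans mmC _; rewrite lte_fin.
Qed.
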